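(* Let $(T_1\to B_1)$ and $(T_2\to B_2)$ be bars. Then the tensor product $(T_1\to B_1)\otimes(T_2\to B_2)$, as a graded filtered chain complex over $\mathbb{F}_2$, is isomorphic to a direct sum of two bars $(X_1\to Y_1)\oplus(X_2\to Y_2)$, where the grading and filtration level of $Y_1$ are the sums of those of $B_1$ and $B_2$, and the grading and filtration level of $X_2$ are the sums of those of $T_1$ and $T_2$. In particular, one of the two summands is an even bar and the other is an odd bar.
   Context: All complexes are finite-dimensional, graded, filtered chain complexes over $\mathbb{F}_2$ whose differential lowers grading by one and does not increase filtration level. A bar $(T\to B)$ is a two-dimensional such complex with basis elements $T$ and $B$ (each homogeneous of a given grading and filtration level), differential $\partial T = B$ (so it is acyclic), with the filtration level of $B$ strictly less than that of $T$. A bar is even or odd according as the grading of $B$ is even or odd. Tensor products carry the grading and filtration given by summing those of the factors and the differential $\partial(x\otimes y)=\partial x\otimes y + x\otimes\partial y$. *)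

From HB Require Import structures.
From mathcomp Require Import all_boot all_order all_algebra.
Set Implicit Arguments. Unset Strict Implicit. Unset Printing Implicit Defensive.
Import Order.TTheory GRing.Theory Num.Theory.
Local Open Scope ring_scope.

(* A finite-dimensional graded filtered chain complex over F_2, presented by a
   finite basis [idx] of homogeneous elements; basis element [i] has grading
   [gr i] and filtration level [fl i] (the filtration level F_p is the span of
   the basis elements of level <= p).  [bd i j] is the coefficient of basis
   element [j] in the differential of basis element [i]. *)
Record cplx := Cplx {
  idx : finType;
  gr : idx -> int;
  fl : idx -> int;
  bd : idx -> idx -> 'F_2 }.

Definition is_cplx (C : cplx) : Prop :=
  (forall i k : idx C, \sum_(j : idx C) bd i j * bd j k = 0) /\
  (forall i j : idx C, bd i j != 0 -> gr j = gr i - 1 /\ (fl j <= fl i)%R).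

(* Isomorphism of graded filtered chain complexes: a bijective linear map P
   (basis element i of C goes to \sum_j P i j e'_j) with inverse Q which is a
   chain map, preserves gradings, and such that both P and Q preserve the
   filtration. *)
Definition cplx_iso (C D : cplx) : Prop :=
  exists (P : idx C -> idx D -> 'F_2) (Q : idx D -> idx C -> 'F_2),
    (forall i k : idx C, \sum_(j : idx D) P i j * Q j k = (i == k)%:R) /\
    (forall i k : idx D, \sum_(j : idx C) Q i j * P j k = (i == k)%:R) /\
    (forall (i : idx C) (k : idx D),
        \sum_(j : idx D) P i j * bd j k = \sum_(j : idx C) bd i j * P j k) /\
    (forall (i : idx C) (j : idx D), P i j != 0 -> gr j = gr i) /\
    (forall (i : idx D) (j : idx C), Q i j != 0 -> gr j = gr i) /\
    (forall (i : idx C) (j : idx D), P i j != 0 -> (fl j <= fl i)%R) /\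
    (forall (i : idx D) (j : idx C), Q i j != 0 -> (fl j <= fl i)%R).

(* Tensor product over F_2 (signs are irrelevant in characteristic 2). *)
Definition tensor (C D : cplx) : cplx :=
  @Cplx (idx C * idx D)%type
    (fun ij => gr ij.1 + gr ij.2)
    (fun ij => fl ij.1 + fl ij.2)
    (fun ij kl => bd ij.1 kl.1 * (ij.2 == kl.2)%:R + (ij.1 == kl.1)%:R * bd ij.2 kl.2).

Definition dsum (C D : cplx) : cplx :=
  @Cplx (idx C + idx D)%type
    (fun i => match i with inl a => gr a | inr b => gr b end)
    (fun i => match i with inl a => fl a | inr b => fl b end)
    (fun i j => match i, j with
                | inl a, inl b => bd a b
                | inr a, inr b => bd a b
                | _, _ => 0 end).

(* A bar (T -> B): gradings gT, gB (with gT = gB + 1, forced by d lowering the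
   grading by one) and filtration levels fT, fB with fB < fT. *)
Record bar := Bar {
  gT : int; gB : int; fT : int; fB : int;
  bar_gr : gT = gB + 1;
  bar_fl : (fB < fT)%R }.

(* The two-dimensional complex of a bar: basis index [true] is T, [false] is B. *)
Definition bar_cplx (b : bar) : cplx :=
  @Cplx bool
    (fun x => if x then gT b else gB b)
    (fun x => if x then fT b else fB b)
    (fun x y => if x && ~~ y then 1 else 0).

Definition bar_even (b : bar) : bool := (2 %| gB b)%Z.

From mathcomp Require Import all_boot all_order all_algebra.
From mathcomp Require Import zify.
Import Order.TTheory GRing.Theory Num.Theory.
Local Open Scope ring_scope.

(* The tensor product has generators TT, TB, BT, BB with d TT = TB + BT and
   d TB = d BT = BB.  Let lo be the one of TB, BT of lower filtration level and
   hi the other one.  In the basis TT, TB + BT, lo, BB the complex splits as the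
   bar (lo -> BB) plus the bar (TT -> TB + BT); the new basis element TB + BT
   has filtration level fl hi, so the change of basis and its inverse both
   respect the filtration.  The two bars differ in the grading of their bottom
   by one, hence have opposite parities. *)

Lemma big_sum_bool (V : nmodType) (F : bool + bool -> V) :
  \sum_(j : bool + bool) F j =
  F (inl true) + F (inl false) + (F (inr true) + F (inr false)).
Proof. by rewrite big_sumType !big_bool. Qed.

Lemma big_prod_bool (V : nmodType) (F : bool * bool -> V) :
  \sum_(j : bool * bool) F j =
  F (true, true) + F (true, false) + (F (false, true) + F (false, false)).
Proof.
rewrite (eq_bigr (fun p => F (p.1, p.2))); last by case.
by rewrite -(pair_bigA _ (fun a b => F (a, b))) !big_bool.
Qed.

Lemma dvdz2_addr1 (x : int) : (2 %| x + 1)%Z = ~~ (2 %| x)%Z.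
Proof. by apply/idP/idP; lia. Qed.

Lemma bar_even_succ (c1 c2 : bar) : gB c2 = gB c1 + 1 -> bar_even c1 != bar_even c2.
Proof. by rewrite /bar_even => ->; rewrite dvdz2_addr1; case: (2 %| _)%Z. Qed.

Section BarTensor.

Variables b1 b2 : bar.

Definition tb_below_bt : bool := fT b1 + fB b2 <= fB b1 + fT b2.

Fact bar_lo_gr : gT b1 + gB b2 = gB b1 + gB b2 + 1.
Proof. by rewrite (bar_gr b1) addrAC. Qed.

Fact bar_lo_fl : fB b1 + fB b2 < Num.min (fT b1 + fB b2) (fB b1 + fT b2).
Proof. have := bar_fl b1; have := bar_fl b2; lia. Qed.

Fact bar_hi_gr : gT b1 + gT b2 = gT b1 + gB b2 + 1.
Proof. by rewrite (bar_gr b2) addrA. Qed.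

Fact bar_hi_fl : Num.max (fT b1 + fB b2) (fB b1 + fT b2) < fT b1 + fT b2.
Proof. have := bar_fl b1; have := bar_fl b2; lia. Qed.

Definition bar_lo : bar := Bar bar_lo_gr bar_lo_fl.
Definition bar_hi : bar := Bar bar_hi_gr bar_hi_fl.

(* [to_bars s i j] is the coefficient of [j] in the image of [i].  Writing
   the target as (X1 -> Y1) + (X2 -> Y2) ([inl]/[inr] for [bar_lo]/[bar_hi],
   [true]/[false] for top/bottom) and lo := (s, ~~ s), hi := (~~ s, s), the
   map is TT |-> X2, BB |-> Y1, lo |-> X1, hi |-> X1 + Y2. *)
Definition to_bars (s : bool) (i : bool * bool) (j : bool + bool) : 'F_2 :=
  match j with
  | inl true => ((i == (s, ~~ s)) || (i == (~~ s, s)))%:R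
  | inl false => (i == (false, false))%:R
  | inr true => (i == (true, true))%:R
  | inr false => (i == (~~ s, s))%:R
  end.

Definition of_bars (s : bool) (j : bool + bool) (i : bool * bool) : 'F_2 :=
  match j with
  | inl true => (i == (s, ~~ s))%:R
  | inl false => (i == (false, false))%:R
  | inr true => (i == (true, true))%:R
  | inr false => ((i == (s, ~~ s)) || (i == (~~ s, s)))%:R
  end.

Local Notation C := (tensor (bar_cplx b1) (bar_cplx b2)).
Local Notation D := (dsum (bar_cplx bar_lo) (bar_cplx bar_hi)).

Lemma to_barsK (s : bool) (i k : idx C) :
  \sum_(j : idx D) to_bars s i j * of_bars s j k = (i == k)%:R.
Proof.
rewrite big_sum_bool.
by case: s; case: i => [[] []]; case: k => [[] []]; apply/eqP.
Qed.

Lemma of_barsK (s : bool) (i k : idx D) :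
  \sum_(j : idx C) of_bars s i j * to_bars s j k = (i == k)%:R.
Proof.
rewrite big_prod_bool.
by case: s; case: i => [[]|[]]; case: k => [[]|[]]; apply/eqP.
Qed.

Lemma to_bars_chain (s : bool) (i : idx C) (k : idx D) :
  \sum_(j : idx D) to_bars s i j * bd j k = \sum_(j : idx C) bd i j * to_bars s j k.
Proof.
rewrite big_sum_bool big_prod_bool.
by case: s; case: i => [[] []]; case: k => [[]|[]]; apply/eqP.
Qed.

Lemma to_bars_gr (s : bool) (i : idx C) (j : idx D) :
  to_bars s i j != 0 -> gr j = gr i.
Proof.
have := bar_gr b1; have := bar_gr b2.
by case: s; case: i => [[] []]; case: j => [[]|[]] //= *; lia.
Qed.

Lemma of_bars_gr (s : bool) (i : idx D) (j : idx C) :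
  of_bars s i j != 0 -> gr j = gr i.
Proof.
have := bar_gr b1; have := bar_gr b2.
by case: s; case: i => [[]|[]]; case: j => [[] []] //= *; lia.
Qed.

Lemma to_bars_fl (i : idx C) (j : idx D) :
  to_bars tb_below_bt i j != 0 -> fl j <= fl i.
Proof.
have := bar_fl b1; have := bar_fl b2; rewrite /tb_below_bt.
by case: (leP (fT b1 + fB b2) (fB b1 + fT b2));
  case: i => [[] []]; case: j => [[]|[]] //= *; lia.
Qed.

Lemma of_bars_fl (i : idx D) (j : idx C) :
  of_bars tb_below_bt i j != 0 -> fl j <= fl i.
Proof.
have := bar_fl b1; have := bar_fl b2; rewrite /tb_below_bt.
by case: (leP (fT b1 + fB b2) (fB b1 + fT b2));
  case: i => [[]|[]]; case: j => [[] []] //= *; lia.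
Qed.

Lemma tensor_bar_iso : cplx_iso C D.
Proof.
exists (to_bars tb_below_bt), (of_bars tb_below_bt).
by do !split; [exact: to_barsK | exact: of_barsK | exact: to_bars_chain
  | exact: to_bars_gr | exact: of_bars_gr | exact: to_bars_fl | exact: of_bars_fl].
Qed.

End BarTensor.

Theorem mainTheorem4 (b1 b2 : bar) :
  exists c1 c2 : bar,
    cplx_iso (tensor (bar_cplx b1) (bar_cplx b2)) (dsum (bar_cplx c1) (bar_cplx c2)) /\
    gB c1 = gB b1 + gB b2 /\ fB c1 = fB b1 + fB b2 /\
    gT c2 = gT b1 + gT b2 /\ fT c2 = fT b1 + fT b2 /\
    bar_even c1 != bar_even c2.
Proof.
exists (bar_lo b1 b2), (bar_hi b1 b2).
do !split; first exact: tensor_bar_iso.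
by apply: bar_even_succ; exact: bar_lo_gr.
Qed.
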